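(* Let $k\ge2$ and let $G=(\{a,b\},\varphi,a)$ be a circular D0L-system with $\varphi$ $k$-uniform. Then no vertex of the graph of overhangs $GO_G$ carries two distinct loops (two distinct edges from the vertex to itself).
   Context: A D0L-system $G=(\mathcal{A},\varphi,w)$ has $L(G)=\{\varphi^n(w)\}$ and $S(L(G))$ the set of factors of its words. An interpretation of $u\in S(L(G))$ is $(p,v,s)$ with $v\in S(L(G))$, $\varphi(v)=pus$. With $v=v_1\cdots v_n$, $v'=v'_1\cdots v'_m$, $u=u_1\cdots u_\ell$, interpretations $(p,v,s),(p',v',s')$ are synchronized at position $j$ if $\varphi(v_1\cdots v_i)=pu_1\cdots u_j$ and $\varphi(v'_1\cdots v'_{i'})=p'u_1\cdots u_j$ for some $i,i'$; $u$ has a synchronizing point at $j$ if all its interpretations are pairwise synchronized at $j$. A PD0L-system injective on $S(L(G))$ is circular if there is $Z$ such that every $u\in S(L(G))$ with $|u|>Z$ has a synchronizing point. $\varphi$ is $k$-uniform if $|\varphi(a)|=|\varphi(b)|=k$. Let $X=\{\varphi(a),\varphi(b)\}$. An overhang is a triple $(u_1\cdots u_m,v_1\cdots v_n,|x|)$ with $u_i,v_j\in X$, $x$ nonempty, such that: (i) $x$ is a suffix of $u_1\cdots u_m$ but not of $u_2\cdots u_m$; (ii) $x$ is a prefix of $v_1\cdots v_n$ but not of $v_1\cdots v_{n-1}$; (iii) $x\ne u_1\cdots u_m$ or $x\ne v_1\cdots v_n$; (iv) $|v_1\cdots v_{n-1}|<|x(u_2\cdots u_m)^{-1}|$. Its left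 overhang is $u_1\cdots u_mx^{-1}$, right overhang $x^{-1}v_1\cdots v_n$. $GO_G$ has an edge from $s_1$ to $s_2$ labelled by each overhang with left overhang $s_1$ and right overhang $s_2$. *)

From HB Require Import structures.
From mathcomp Require Import all_boot.
Set Implicit Arguments. Unset Strict Implicit. Unset Printing Implicit Defensive.

Inductive ab := a | b.

Definition ab_eqb (x y : ab) : bool :=
  match x, y with a, a | b, b => true | _, _ => false end.
Lemma ab_eqP : Equality.axiom ab_eqb.
Proof. by case; case; constructor. Qed.
HB.instance Definition _ := hasDecEq.Build ab ab_eqP.

Definition phiw (phi : ab -> seq ab) (w : seq ab) : seq ab := flatten (map phi w).

(* S(L(G)) for G = ({a,b}, phi, w): factors of the words phi^n(w). *)
Definition factorL (phi : ab -> seq ab) (w u : seq ab) : Prop :=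
  exists n, infix u (iter n (phiw phi) w).

Definition interpretation (phi : ab -> seq ab) (w u p v s : seq ab) : Prop :=
  factorL phi w v /\ phiw phi v = p ++ u ++ s.

Definition cuts_at (phi : ab -> seq ab) (u p v : seq ab) (j : nat) : Prop :=
  exists i, phiw phi (take i v) = p ++ take j u.

Definition synchronized (phi : ab -> seq ab) (u p v p' v' : seq ab) (j : nat) : Prop :=
  cuts_at phi u p v j /\ cuts_at phi u p' v' j.

Definition sync_point (phi : ab -> seq ab) (w u : seq ab) (j : nat) : Prop :=
  j <= size u /\
  forall p v s p' v' s',
    interpretation phi w u p v s -> interpretation phi w u p' v' s' ->
    synchronized phi u p v p' v' j.

(* circular: a PD0L-system, injective on S(L(G)), with a synchronization delay Z *)
Definition circular (phi : ab -> seq ab) (w : seq ab) : Prop :=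
  (forall c, phi c != [::]) /\
  (forall v v', factorL phi w v -> factorL phi w v' -> phiw phi v = phiw phi v' -> v = v') /\
  (exists Z, forall u, factorL phi w u -> Z < size u -> exists j, sync_point phi w u j).

Definition uniform (phi : ab -> seq ab) (k : nat) : Prop := forall c, size (phi c) = k.

Definition inX (phi : ab -> seq ab) (y : seq ab) : bool := (y == phi a) || (y == phi b).

(* (U, V, l) is an overhang, where U = u_1...u_m, V = v_1...v_n, l = |x|. *)
Definition overhang (phi : ab -> seq ab) (U V : seq ab) (l : nat) : Prop :=
  exists (us vs : seq (seq ab)) (x : seq ab),
    [/\ all (inX phi) us, all (inX phi) vs, flatten us = U, flatten vs = V
      & [/\ size x = l /\ x != [::],
            suffix x U && ~~ suffix x (flatten (behead us)),
            prefix x V && ~~ prefix x (flatten (take (size vs).-1 vs)),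
            (x != U) || (x != V)
          & size (flatten (take (size vs).-1 vs))
                          < size x - size (flatten (behead us))]].

Definition left_overhang (U : seq ab) (l : nat) : seq ab := take (size U - l) U.
Definition right_overhang (V : seq ab) (l : nat) : seq ab := drop l V.

(* edges of GO_G: an edge from s1 to s2 for each overhang with left s1, right s2.
   An edge is identified with its label (the overhang triple). *)
Definition GO_edge (phi : ab -> seq ab) (s1 s2 : seq ab) (o : seq ab * seq ab * nat) : Prop :=
  let: (U, V, l) := o in
  [/\ overhang phi U V l, left_overhang U l = s1 & right_overhang V l = s2].

From HB Require Import structures.
From mathcomp Require Import all_boot.

Set Implicit Arguments.
Unset Strict Implicit.
Unset Printing Implicit Defensive.

(* A loop at s is an overhang (s x, x s, |x|).  Uniformity and condition (iv)
   force s x and x s to be single blocks of X, so two loops (s x, x s) and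
   (s y, y s) with x <> y would make {s x, s y} = {x s, y s} = X.  Then x and y
   both commute with s s, and two words of the same length commuting with a
   nonempty word are equal. *)

Lemma in_pair_cover (T : eqType) (p q u v w : T) :
  u \in [:: p; q] -> v \in [:: p; q] -> w \in [:: p; q] -> u != v -> w \in [:: u; v].
Proof.
rewrite !mem_seq2 => /orP[]/eqP-> /orP[]/eqP-> /orP[]/eqP->;
  by rewrite ?eqxx ?orbT.
Qed.

Section Words.
Variable T : eqType.

Lemma commute_cat_nseq (t x : seq T) n :
  t ++ x = x ++ t -> flatten (nseq n t) ++ x = x ++ flatten (nseq n t).
Proof.
move=> tx; elim: n => [|n IHn] /=; first by rewrite cats0.
by rewrite -catA IHn catA tx catA.
Qed.

Lemma size_flatten_nseq (t : seq T) n : size (flatten (nseq n t)) = n * size t.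
Proof. by elim: n => //= n IHn; rewrite size_cat IHn mulSn. Qed.

Lemma commute_take_nseq (t x : seq T) : t != [::] -> t ++ x = x ++ t ->
  x = take (size x) (flatten (nseq (size x) t)).
Proof.
move=> t0 tx; have := congr1 (take (size x)) (commute_cat_nseq (size x) tx).
have le_x_pow : size x <= size (flatten (nseq (size x) t)).
  by rewrite size_flatten_nseq leq_pmulr // lt0n size_eq0.
by rewrite takel_cat // take_size_cat // => ->.
Qed.

Lemma commute_eq (t x y : seq T) : t != [::] ->
  t ++ x = x ++ t -> t ++ y = y ++ t -> size x = size y -> x = y.
Proof.
move=> t0 tx ty sxy.
by rewrite (commute_take_nseq t0 tx) (commute_take_nseq t0 ty) sxy.
Qed.

Lemma loop_words_eq (p q s x y : seq T) : s != [::] -> size x = size y ->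
  all (mem [:: p; q]) [:: s ++ x; s ++ y; x ++ s; y ++ s] -> x = y.
Proof.
move=> s0 sxy /= /and5P[sxP syP xsP ysP _].
have [// | xy] := eqVneq x y; exfalso.
have ss0 : s ++ s != [::] by rewrite -size_eq0 size_cat addn_eq0 size_eq0 (negPf s0).
have sxy' : s ++ x != s ++ y by rewrite eqseq_cat // (negPf xy) andbF.
have xs_yy : x ++ s != y ++ s by rewrite eqseq_cat // (negPf xy).
have := in_pair_cover sxP syP xsP sxy'; have := in_pair_cover sxP syP ysP sxy'.
rewrite !mem_seq2 => /orP[]/eqP ys /orP[]/eqP xs.
- by move: xs_yy; rewrite xs ys eqxx.
- have ssx : (s ++ s) ++ x = x ++ s ++ s by rewrite -catA -ys catA -xs -catA.
  have ssy : (s ++ s) ++ y = y ++ s ++ s by rewrite -catA -xs catA -ys -catA.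
  by move: xy; rewrite (commute_eq ss0 ssx ssy sxy) eqxx.
- by move: xy; rewrite (commute_eq s0 (esym xs) (esym ys) sxy) eqxx.
- by move: xs_yy; rewrite xs ys eqxx.
Qed.

End Words.

Lemma size_inX phi k w : uniform phi k -> inX phi w -> size w = k.
Proof. by move=> unif /orP[]/eqP->. Qed.

Lemma size_flatten_inX phi k us : uniform phi k -> all (inX phi) us ->
  size (flatten us) = size us * k.
Proof.
move=> unif; elim: us => //= u us IHus /andP[uX usX].
by rewrite size_cat IHus // (size_inX unif uX) mulSn.
Qed.

Lemma left_overhang_suffix (x U : seq ab) : suffix x U -> left_overhang U (size x) ++ x = U.
Proof.
case/suffixP=> y ->; rewrite /left_overhang size_cat addnK.
by rewrite take_size_cat.
Qed.

Lemma right_overhang_prefix (x V : seq ab) : prefix x V -> x ++ right_overhang V (size x) = V.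
Proof. by case/prefixP=> y ->; rewrite /right_overhang drop_size_cat. Qed.

Lemma GO_loopE phi s o : GO_edge phi s s o ->
  exists2 x, o = (s ++ x, x ++ s, size x) & s != [::].
Proof.
case: o => [[U V] l] [[us [vs [x [_ _ _ _ [[<- _] /andP[sufx _] /andP[prex _] xUV _]]]]]].
move=> def_left def_right; exists x.
  by rewrite -{1}def_left -def_right left_overhang_suffix // right_overhang_prefix.
apply: contraTneq xUV => s0.
by rewrite -(left_overhang_suffix sufx) -(right_overhang_prefix prex) def_left def_right s0 cats0 eqxx.
Qed.

Lemma balanced_overhang_inX phi k U V l : 0 < k -> uniform phi k ->
  overhang phi U V l -> size U = size V -> inX phi U && inX phi V.
Proof.
move=> k0 unif [us [vs [x [usX vsX defU defV [[sx x0] /andP[sufx _] _ _ lt_iv]]]]] eqUV.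
case: us usX defU sufx lt_iv => [|u us] /=.
  by move=> _ <- /size_suffix; rewrite leqn0 size_eq0 (negPf x0).
case/andP=> uX usX defU sufx.
case/lastP: vs vsX defV => [|vs v].
  move=> _ /= defV; move/eqP: eqUV.
  by rewrite -defU -defV size_cat (size_inX unif uX) addn_eq0 (gtn_eqF k0).
rewrite all_rcons flatten_rcons size_rcons -cats1 take_size_cat //= => /andP[vX vsX] defV.
rewrite !(size_flatten_inX unif) // => lt_iv.
have sizeU : size U = k + size us * k.
  by rewrite -defU size_cat (size_inX unif uX) (size_flatten_inX unif).
have sizeV : size V = size vs * k + k.
  by rewrite -defV size_cat (size_inX unif vX) (size_flatten_inX unif).
have leU := size_suffix sufx.
have vs0 : size vs = 0.
  suff : size vs * k < 1 * k by rewrite ltn_pmul2r // ltnS leqn0 => /eqP.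
  rewrite mul1n -(ltn_add2r (size us * k)) -sizeU.
  by apply: (leq_trans _ leU); rewrite addnC -ltn_subRL.
have us0 : size us = 0.
  move/eqP: eqUV; rewrite sizeU sizeV vs0 add0n -[X in _ == X]addn0 eqn_add2l muln_eq0.
  by rewrite (gtn_eqF k0) orbF => /eqP.
move: defU defV; rewrite (size0nil us0) (size0nil vs0) /= cats0 => <- <-.
by rewrite uX.
Qed.

Theorem mainTheorem6 (k : nat) (phi : ab -> seq ab) :
  2 <= k -> uniform phi k -> circular phi [:: a] ->
  forall (s : seq ab) (o1 o2 : seq ab * seq ab * nat),
    GO_edge phi s s o1 -> GO_edge phi s s o2 -> o1 = o2.
Proof.
move=> k2 unif _ s o1 o2 E1 E2.
have k0 : 0 < k by apply: leq_trans k2.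
have [x1 def_o1 s0] := GO_loopE E1; have [x2 def_o2 _] := GO_loopE E2.
move: E1 E2; rewrite def_o1 def_o2 => -[ov1 _ _] -[ov2 _ _].
have size_cat_comm w : size (s ++ w) = size (w ++ s) by rewrite !size_cat addnC.
have /andP[sx1X x1sX] := balanced_overhang_inX k0 unif ov1 (size_cat_comm x1).
have /andP[sx2X x2sX] := balanced_overhang_inX k0 unif ov2 (size_cat_comm x2).
have size_x12 : size x1 = size x2.
  by apply/eqP; rewrite -(eqn_add2l (size s)) -!size_cat (size_inX unif sx1X) (size_inX unif sx2X).
have inXE w : inX phi w = (w \in [:: phi a; phi b]) by rewrite mem_seq2.
suff -> : x1 = x2 by [].
by apply: (loop_words_eq (p := phi a) (q := phi b) s0 size_x12); rewrite /= -!inXE sx1X sx2X x1sX x2sX.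
Qed.
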